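(* Fix $q>0$, $R_B>0$ and $\mathbf{w}\in\mathbb{R}^n_{++}$ with $W=\sum_b w_b$. Let $\Pi\in(0,W)$. Write $$P_{\max}=\frac{W qR_B}{W-\Pi},\qquad g(P)=\frac{(qR_BW-(W-\Pi)P)^2}{2qR_B(W-\Pi)W}.$$ Then the set $\{(P,R_A)\in\mathbb{R}^2_+:\ \pi_A^*(P,R_A,R_B)=\Pi\}$ is described as follows. (a) If $\Pi<W/2$, the set consists exactly of: - the pairs $(P,R_A)$ with $P\in\big[0,\tfrac{W-2\Pi}{W-\Pi}qR_B\big)$ and $R_A=\frac{2\Pi}{W}(qR_B-P)$; together with - the pairs $(P,R_A)$ with $P\in\big[\tfrac{W-2\Pi}{W-\Pi}qR_B,\,P_{\max}\big]$ and $R_A=g(P)$. (b) If $\Pi\ge W/2$, the set consists exactly of the pairs $(P,R_A)$ with $P\in[0,P_{\max}]$ and $R_A=g(P)$. Moreover, $\pi_A^*(P,R_A,R_B)>\Pi$ for every $R_A\ge 0$ whenever $P>P_{\max}$.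
   Context: **Battlefields.** There are $n$ battlefields $\mathcal{B}=\{1,\dots,n\}$. Battlefield $b$ has value $w_b>0$, common to both players, and $W=\sum_b w_b$. **Endowments.** Player $A$ has $P\ge 0$ pre-allocated resources and $R_A\ge 0$ real-time resources. Player $B$ has $R_B>0$ real-time resources. The constant $q>0$ is the effectiveness of $B$'s resources relative to $A$'s. **Stage 1.** Player $A$ deterministically chooses a pre-allocation $\mathbf{p}\in\Delta_n(P):=\{\mathbf{p}\in\mathbb{R}^n_+:\sum_b p_b=P\}$. This choice is binding and revealed to $B$. **Stage 2.** Each player $i\in\{A,B\}$ simultaneously chooses a distribution $F_i$ over allocations $\mathbf{x}_i\in\mathbb{R}^n_+$ with $\mathbb{E}[\sum_b x_{i,b}]\le R_i$. Player $A$ wins battlefield $b$ if $x_{A,b}+p_b>q\,x_{B,b}$; otherwise $B$ wins it. The tie-breaking rule is arbitrary. $A$'s payoff is the expected total value won, and $B$'s payoff is $W$ minus this. **Equilibrium payoffs.** The stage-2 game has unique equilibrium payoffs; $A$'s is denoted $\pi_A(\mathbf{p},R_A,R_B)$. Define $$\pi_A^*(P,R_A,R_B)=\max_{\mathbf{p}\in\Delta_n(P)}\pi_A(\mathbf{p},R_A,R_B).$$ This maximum equals the following. - If $qR_B>P$ and $R_A<\dfrac{2(qR_B-P)^2}{2qR_B-P}$: $\ \pi_A^*(P,R_A,R_B)=\dfrac{W R_A}{2(qR_B-P)}$. - Otherwise: $\ \pi_A^*(P,R_A,R_B)=W\left(1-\dfrac{qR_B}{P+R_A+\sqrt{(R_A+P)^2-P^2}}\right)$.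 *)

From HB Require Import structures.
From mathcomp Require Import all_boot all_order all_algebra.
From mathcomp Require Import reals.
Set Implicit Arguments. Unset Strict Implicit. Unset Printing Implicit Defensive.
Import Order.TTheory GRing.Theory Num.Theory.
Local Open Scope ring_scope.

(* Player A's optimal equilibrium payoff pi_A^*(P, R_A, R_B), where W is the
   total battlefield value and q the effectiveness of B's resources. *)
Definition piA_star {R : realType} (W q RB P RA : R) : R :=
  if (P < q * RB) && (RA < 2 * (q * RB - P) ^+ 2 / (2 * q * RB - P))
  then W * RA / (2 * (q * RB - P))
  else W * (1 - q * RB / (P + RA + Num.sqrt ((RA + P) ^+ 2 - P ^+ 2))).

Definition Pmax {R : realType} (W q RB Pi : R) : R := W * q * RB / (W - Pi).

Definition gfun {R : realType} (W q RB Pi P : R) : R :=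
  (q * RB * W - (W - Pi) * P) ^+ 2 / (2 * q * RB * (W - Pi) * W).

From HB Require Import structures.
From mathcomp Require Import all_boot all_order all_algebra.
From mathcomp Require Import reals.
From mathcomp Require Import ring lra.
Import Order.TTheory GRing.Theory Num.Theory.
Local Open Scope ring_scope.

(* Write Q = q R_B and M = P_max.  On the second branch of pi_A^*, the payoff
   equals Pi exactly when P + R_A + sqrt(R_A^2 + 2 P R_A) = M, i.e. when
   R_A = (M - P)^2 / (2M) = g(P); on the first branch it equals Pi exactly when
   R_A = 2 Pi (Q - P) / W.  Each candidate lies in the region of its own
   branch precisely on one side of the threshold P = 2Q - M, which is
   nonpositive iff Pi >= W/2.  For P > M the second branch applies and the
   sum under the square root already exceeds M. *)

Lemma sum_sqrt_eq_iff {R : realType} (M P RA : R) :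
  0 < M -> 0 <= P -> 0 <= RA ->
  P + RA + Num.sqrt ((RA + P) ^+ 2 - P ^+ 2) = M <->
  P <= M /\ RA = (M - P) ^+ 2 / (2 * M).
Proof.
move=> M_gt0 P_ge0 RA_ge0.
have disc_ge0 : 0 <= (RA + P) ^+ 2 - P ^+ 2 by nra.
split=> [sumE | [P_le_M RAE]].
- have sqrt_ge0 := sqrtr_ge0 ((RA + P) ^+ 2 - P ^+ 2).
  have sqrtE := sqr_sqrtr disc_ge0.
  rewrite (_ : Num.sqrt _ = M - P - RA) in sqrt_ge0 sqrtE; last by lra.
  split; first lra.
  have RA_2M : RA * (2 * M) = (M - P) ^+ 2 by nra.
  by rewrite -RA_2M; field; lra.
- have RA_2M : RA * (2 * M) = (M - P) ^+ 2 by rewrite RAE; field; lra.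
  have RA_le : 0 <= M - P - RA.
    have : 0 <= (M - P - RA) * (2 * M) by nra.
    by rewrite pmulr_lge0 //; lra.
  have discE : (RA + P) ^+ 2 - P ^+ 2 = (M - P - RA) ^+ 2 by nra.
  by rewrite discE sqrtr_sqr ger0_norm //; lra.
Qed.

Lemma payoff_subE {R : realType} (W Q Pi S : R) : Pi < W -> S != 0 ->
  W * (1 - Q / S) - Pi = (W - Pi) * (S - W * Q / (W - Pi)) / S.
Proof. by move=> Pi_lt_W S_neq0; field; rewrite S_neq0; apply/eqP; lra. Qed.

Lemma payoff_eq_iff {R : realType} (W Q Pi S : R) : Pi < W -> 0 < S ->
  W * (1 - Q / S) = Pi <-> S = W * Q / (W - Pi).
Proof.
move=> Pi_lt_W S_gt0; rewrite (rwP eqP) (rwP (S =P _)) -subr_eq0.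
rewrite payoff_subE ?(gt_eqF S_gt0) // !mulf_eq0 invr_eq0 (gt_eqF S_gt0) orbF.
by rewrite subr_eq0 (gt_eqF Pi_lt_W) /= subr_eq0.
Qed.

Lemma lt_Pmax {R : realType} (W Q Pi : R) : 0 < Q -> 0 < Pi -> Pi < W ->
  Q < W * Q / (W - Pi).
Proof.
move=> Q_gt0 Pi_gt0 Pi_lt_W.
have subE : W * Q / (W - Pi) - Q = Q * Pi / (W - Pi) by field; lra.
have : 0 < Q * Pi / (W - Pi) by rewrite divr_gt0 ?mulr_gt0 //; lra.
by lra.
Qed.

(* 2 (Q - P)^2 / (2Q - P) is the value of R_A at which pi_A^* switches branch. *)
Lemma linear_solution_lt_boundary {R : realType} (W Q Pi P : R) :
  0 < Pi -> Pi < W -> 0 <= P -> P < Q ->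
  (2 * Pi / W * (Q - P) < 2 * (Q - P) ^+ 2 / (2 * Q - P)) =
  (P < 2 * Q - W * Q / (W - Pi)).
Proof.
move=> Pi_gt0 Pi_lt_W P_ge0 P_lt_Q.
have diffE : 2 * Pi / W * (Q - P) - 2 * (Q - P) ^+ 2 / (2 * Q - P) =
    2 * (Q - P) * (W - Pi) / (W * (2 * Q - P)) * (P - (2 * Q - W * Q / (W - Pi))).
  by field; apply/and3P; split; apply/eqP; lra.
have coef_gt0 : 0 < 2 * (Q - P) * (W - Pi) / (W * (2 * Q - P)).
  by rewrite divr_gt0 ?mulr_gt0 //; lra.
by rewrite -subr_lt0 diffE pmulr_rlt0 // subr_lt0.
Qed.

Lemma boundary_le_sqrt_solution {R : realType} (Q M P : R) :
  0 <= P -> P < Q -> Q < M ->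
  (2 * (Q - P) ^+ 2 / (2 * Q - P) <= (M - P) ^+ 2 / (2 * M)) = (2 * Q - M <= P).
Proof.
move=> P_ge0 P_lt_Q Q_lt_M.
have diffE : (M - P) ^+ 2 / (2 * M) - 2 * (Q - P) ^+ 2 / (2 * Q - P) =
    (P - (2 * Q - M)) * (- (P ^+ 2 + M * P - 2 * M * Q) / (2 * M * (2 * Q - P))).
  by field; apply/andP; split; apply/eqP; lra.
have coef_gt0 : 0 < - (P ^+ 2 + M * P - 2 * M * Q) / (2 * M * (2 * Q - P)).
  by rewrite divr_gt0 ?mulr_gt0 //; nra.
by rewrite -subr_ge0 diffE pmulr_lge0 // subr_ge0.
Qed.

Lemma piA_star_linear {R : realType} (W q RB P RA : R) :
  (P < q * RB) && (RA < 2 * (q * RB - P) ^+ 2 / (2 * (q * RB) - P)) ->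
  piA_star W q RB P RA = W * RA / (2 * (q * RB - P)).
Proof. by rewrite /piA_star -[2 * q * RB]mulrA => ->. Qed.

Lemma piA_star_sqrt {R : realType} (W q RB P RA : R) :
  ~~ ((P < q * RB) && (RA < 2 * (q * RB - P) ^+ 2 / (2 * (q * RB) - P))) ->
  piA_star W q RB P RA =
    W * (1 - q * RB / (P + RA + Num.sqrt ((RA + P) ^+ 2 - P ^+ 2))).
Proof. by rewrite /piA_star -[2 * q * RB]mulrA => /negbTE ->. Qed.

Lemma sqrt_branch_sum_gt0 {R : realType} {Q P RA : R} :
  0 < Q -> 0 <= P -> 0 <= RA ->
  ~~ ((P < Q) && (RA < 2 * (Q - P) ^+ 2 / (2 * Q - P))) ->
  0 < P + RA + Num.sqrt ((RA + P) ^+ 2 - P ^+ 2).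
Proof.
move=> Q_gt0 P_ge0 RA_ge0; have := sqrtr_ge0 ((RA + P) ^+ 2 - P ^+ 2).
have [P_lt_Q | ] := ltP P Q; last lra.
have : 0 < 2 * (Q - P) ^+ 2 / (2 * Q - P).
  by rewrite divr_gt0 ?mulr_gt0 ?exprn_gt0 //; lra.
by rewrite /= -leNgt; lra.
Qed.

Lemma piA_star_eq_iff {R : realType} (W q RB Pi P RA : R) :
  0 < q -> 0 < RB -> 0 < Pi -> Pi < W -> 0 <= P -> 0 <= RA ->
  let M := W * (q * RB) / (W - Pi) in
  piA_star W q RB P RA = Pi <->
    (P < 2 * (q * RB) - M /\ RA = 2 * Pi / W * (q * RB - P))
    \/ (2 * (q * RB) - M <= P /\ P <= M /\ RA = (M - P) ^+ 2 / (2 * M)).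
Proof.
move=> q_gt0 RB_gt0 Pi_gt0 Pi_lt_W P_ge0 RA_ge0 M.
have Q_gt0 : 0 < q * RB by rewrite mulr_gt0.
have Q_lt_M : q * RB < M by rewrite lt_Pmax.
have [branch | branch] :=
  boolP ((P < q * RB) && (RA < 2 * (q * RB - P) ^+ 2 / (2 * (q * RB) - P))).
- have /andP[P_lt_Q RA_lt] := branch.
  rewrite piA_star_linear //; split=> [payoffE | [[P_lt ->] | [P_ge [_ RAE]]]].
  + have RAE : RA = 2 * Pi / W * (q * RB - P).
      by rewrite -payoffE; field; apply/andP; split; apply/eqP; lra.
    by left; rewrite -linear_solution_lt_boundary // -RAE.
  + by field; apply/andP; split; apply/eqP; lra.
  + by move: RA_lt; rewrite RAE ltNge boundary_le_sqrt_solution // P_ge.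
- have S_gt0 := sqrt_branch_sum_gt0 Q_gt0 P_ge0 RA_ge0 branch.
  rewrite piA_star_sqrt // payoff_eq_iff // sum_sqrt_eq_iff ?(lt_trans Q_gt0) //.
  split=> [[P_le_M RAE] | [[P_lt RAE] | [_ //]]].
  + right; split=> //; rewrite leNgt; apply/negP => P_lt.
    have P_lt_Q : P < q * RB by lra.
    by move: branch; rewrite P_lt_Q /= RAE -leNgt boundary_le_sqrt_solution // leNgt P_lt.
  + have P_lt_Q : P < q * RB by lra.
    by move: branch; rewrite P_lt_Q /= RAE linear_solution_lt_boundary // P_lt.
Qed.

Lemma piA_star_gt_beyond_Pmax {R : realType} (W q RB Pi P RA : R) :
  0 < q -> 0 < RB -> 0 < Pi -> Pi < W ->
  W * (q * RB) / (W - Pi) < P -> 0 <= RA -> Pi < piA_star W q RB P RA.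
Proof.
move=> q_gt0 RB_gt0 Pi_gt0 Pi_lt_W M_lt_P RA_ge0.
have Q_gt0 : 0 < q * RB by rewrite mulr_gt0.
have Q_lt_M : q * RB < W * (q * RB) / (W - Pi) by rewrite lt_Pmax.
have branch :
    ~~ ((P < q * RB) && (RA < 2 * (q * RB - P) ^+ 2 / (2 * (q * RB) - P))).
  by rewrite negb_and -leNgt; apply/orP; left; lra.
have S_gt0 := sqrt_branch_sum_gt0 Q_gt0 (ltW (lt_trans Q_gt0 (lt_trans Q_lt_M M_lt_P)))
  RA_ge0 branch.
have := sqrtr_ge0 ((RA + P) ^+ 2 - P ^+ 2).
set S := P + RA + _ in S_gt0 * => sqrt_ge0.
rewrite piA_star_sqrt // -subr_gt0 payoff_subE ?gt_eqF //.
by rewrite divr_gt0 // mulr_gt0 // subr_gt0 /S; lra.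
Qed.

Theorem theorem2 (R : realType) (n : nat) (w : 'I_n -> R) (q RB Pi : R) :
  0 < q -> 0 < RB -> (forall b, 0 < w b) ->
  let W := \sum_(b < n) w b in
  0 < Pi -> Pi < W ->
  (* (a) *)
  (Pi < W / 2 ->
    forall P RA : R, 0 <= P -> 0 <= RA ->
      (piA_star W q RB P RA = Pi <->
        ((P < (W - 2 * Pi) / (W - Pi) * q * RB /\ RA = 2 * Pi / W * (q * RB - P))
         \/ ((W - 2 * Pi) / (W - Pi) * q * RB <= P /\ P <= Pmax W q RB Pi
             /\ RA = gfun W q RB Pi P)))) /\
  (* (b) *)
  (W / 2 <= Pi ->
    forall P RA : R, 0 <= P -> 0 <= RA ->
      (piA_star W q RB P RA = Pi <->
        (P <= Pmax W q RB Pi /\ RA = gfun W q RB Pi P))) /\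
  (* moreover *)
  (forall P RA : R, Pmax W q RB Pi < P -> 0 <= RA -> Pi < piA_star W q RB P RA).
Proof.
move=> q_gt0 RB_gt0 _ W Pi_gt0 Pi_lt_W; clearbody W.
have PmaxE : Pmax W q RB Pi = W * (q * RB) / (W - Pi) by rewrite /Pmax mulrA.
have thresholdE :
    (W - 2 * Pi) / (W - Pi) * q * RB = 2 * (q * RB) - Pmax W q RB Pi.
  by rewrite PmaxE; field; lra.
have gfunE P : gfun W q RB Pi P = (Pmax W q RB Pi - P) ^+ 2 / (2 * Pmax W q RB Pi).
  by rewrite /gfun PmaxE; field; apply/and4P; split; apply/eqP; lra.
rewrite thresholdE; split; [|split].
- by move=> _ P RA P_ge0 RA_ge0; rewrite gfunE PmaxE piA_star_eq_iff.
- move=> Pi_ge_halfW P RA P_ge0 RA_ge0.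
  have threshold_le0 : 2 * (q * RB) - Pmax W q RB Pi <= 0.
    rewrite -thresholdE -mulrA; apply: mulr_le0_ge0; last by rewrite mulr_ge0 ?ltW.
    by apply: mulr_le0_ge0; rewrite ?invr_ge0; lra.
  rewrite gfunE PmaxE piA_star_eq_iff // -PmaxE.
  split=> [[[P_lt _] | [_ //]] | [P_le_M RAE]].
    by have := lt_le_trans P_lt threshold_le0; rewrite ltNge P_ge0.
  by right; split; [exact: le_trans threshold_le0 P_ge0 | split].
- by move=> P RA; rewrite PmaxE; exact: piA_star_gt_beyond_Pmax.
Qed.
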